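(* Let $\mathfrak{g}$ be a complex filiform Lie algebra of nilpotency class $c\ge 5$. Then $\mathfrak{g}$ does not admit a periodic prederivation.
   Context: A nilpotent Lie algebra of dimension $n$ is filiform if its nilpotency class is $n-1$. A linear map $P:\mathfrak{g}\to\mathfrak{g}$ is a prederivation if $P([x,[y,z]])=[P(x),[y,z]]+[x,[P(y),z]]+[x,[y,P(z)]]$ for all $x,y,z\in\mathfrak{g}$; it is periodic if $P^m=\mathrm{id}$ for some integer $m\ge 1$. *)

(* Complex numbers = complex R (real-closed library) for a
   realType R (any realType is the field of real numbers up to isomorphism). *)
From HB Require Import structures.
From mathcomp Require Import all_boot all_order all_algebra.
From mathcomp Require Import complex.
From mathcomp Require Import reals.
Set Implicit Arguments. Unset Strict Implicit. Unset Printing Implicit Defensive.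
Import Order.TTheory GRing.Theory Num.Theory.
Local Open Scope ring_scope.

Section LieDefs.
Variables (F : fieldType) (V : vectType F) (br : V -> V -> V).

Definition is_lie_bracket : Prop :=
  [/\ (forall (a : F) (x y z : V), br (a *: x + y) z = a *: br x z + br y z),
      (forall (a : F) (x y z : V), br x (a *: y + z) = a *: br x y + br x z),
      (forall x : V, br x x = 0) &
      (forall x y z : V, br x (br y z) + br y (br z x) + br z (br x y) = 0)].

(* [A, B] : the subspace spanned by all brackets [a, b], a in A, b in B
   (by bilinearity it suffices to bracket basis vectors). *)
Definition brspace (A B : {vspace V}) : {vspace V} :=
  (<< [seq br u v | u <- vbasis A, v <- vbasis B] >>)%VS.

(* lower central series, indexed as in the paper: C^1 = g, C^{i+1} = [g, C^i];
   C^0 is also set to g *)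
Fixpoint lcs (i : nat) : {vspace V} :=
  match i with
  | 0 => fullv
  | 1 => fullv
  | k.+1 => brspace fullv (lcs k)
  end.

Definition nil_class (c : nat) : Prop :=
  lcs c.+1 = 0%VS /\ lcs c != 0%VS.

Definition filiform : Prop := nil_class (\dim (fullv : {vspace V})).-1.

Definition prederivation (P : V -> V) : Prop :=
  linear P /\
  forall x y z : V,
    P (br x (br y z)) = br (P x) (br y z) + br x (br (P y) z) + br x (br y (P z)).

Definition periodic (P : V -> V) : Prop :=
  exists m : nat, (1 <= m)%N /\ forall x : V, iter m P x = x.

End LieDefs.

From HB Require Import structures.
From mathcomp Require Import all_boot all_order all_algebra.
From mathcomp Require Import complex reals.
From mathcomp Require Import separable cyclotomic cyclic.
From mathcomp Require Import ring zify.
Set Implicit Arguments. Unset Strict Implicit. Unset Printing Implicit Defensive.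
Import Order.TTheory GRing.Theory Num.Theory.
Local Open Scope ring_scope.

(* A periodic prederivation [P] is diagonalizable with eigenvalues of modulus one, and
   for eigenvectors [a], [b], [z] with eigenvalues [la], [lb], [lz] the bracket
   [[a,[b,z]]] is an eigenvector for [la + lb + lz]; hence it vanishes unless
   [|la + lb + lz| = 1].  In a filiform algebra [\dim C^k = n - k] for [k >= 2], so [g]
   is generated modulo [C^2] by two eigenvectors [x], [y], every [C^k / C^(k+1)]
   ([k >= 2]) is a line, and [C^(k+1)] is spanned modulo [C^(k+2)] by the brackets of
   [x] and [y] with a generator of [C^k].  Too many vanishing brackets make some [C^k]
   collapse onto [C^(k+1)].  This forces the eigenvalues of [x] and [y] to be
   opposite, [al] and [-al], and an eigenvector [v] with [v = [x,y]] modulo [C^3] to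
   have eigenvalue [al] or [-al]; following the layers up to [C^6], which requires
   [c >= 5], each case again collapses a layer. *)

Section VectorSpaces.
Variables (F : fieldType) (V : vectType F).
Implicit Types (U W : {vspace V}) (x y u : V).

Lemma span_ind (S : seq V) (Q : V -> Prop) :
  Q 0 -> (forall a u w, Q u -> Q w -> Q (a *: u + w)) ->
  (forall s, s \in S -> Q s) -> forall u, u \in <<S>>%VS -> Q u.
Proof.
move=> Q0 QC QS u uS; rewrite (coord_span (X := in_tuple S) uS).
by apply: big_rec => // i x _ Qx; apply: QC => //; apply/QS/mem_nth.
Qed.

Lemma memv_addl U W u : u \in U -> u \in (U + W)%VS.
Proof. exact: subvP (addvSl U W) u. Qed.

Lemma memv_addr U W u : u \in W -> u \in (U + W)%VS.
Proof. exact: subvP (addvSr U W) u. Qed.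

Lemma memv_add_line U x u : u \in (<[x]> + U)%VS -> exists t, u - t *: x \in U.
Proof. by case/memv_addP => _ /vlineP [t ->] [w wU ->]; exists t; rewrite addrC addKr. Qed.

Lemma dimv_add_line U x : x \notin U -> \dim (<[x]> + U) = (\dim U).+1.
Proof.
move=> xU; rewrite dimv_disjoint_sum; last first.
  apply/eqP; rewrite -subv0; apply/subvP => _ /memv_capP [/vlineP [t ->] txU].
  rewrite memv0 scaler_eq0; apply/contraR: xU => /norP [t0 _].
  by rewrite -[x](scalerK t0) memvZ.
by rewrite dim_vline; case: eqP xU => // ->; rewrite mem0v.
Qed.

Lemma proper_fullv_dim U : (\dim U < \dim (fullv : {vspace V}))%N -> U != fullv.
Proof. by apply: contraTneq => ->; rewrite ltnn. Qed.

Lemma dim_vline_leq x : (\dim <[x]> <= 1)%N.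
Proof. by rewrite dim_vline; case: (x != 0). Qed.

Lemma subv_add_line_exchange U W x y u a b : b != 0 ->
  (U <= <[x]> + <[y]> + W)%VS -> u - (a *: x + b *: y) \in W ->
  (U <= <[x]> + <[u]> + W)%VS.
Proof.
move=> b0 sU uW; apply: subv_trans sU _; rewrite !subv_add -!memvE addvSr andbT.
have Lx : x \in (<[x]> + <[u]> + W)%VS by rewrite !memv_addl ?memv_line.
have -> : y = b^-1 *: (u - a *: x - (u - (a *: x + b *: y))).
  by rewrite opprB addrC -!addrA addKr addrCA subrr addr0 scalerA mulVf ?scale1r.
have Lu : u \in (<[x]> + <[u]> + W)%VS by rewrite memv_addl // memv_addr ?memv_line.
rewrite Lx memvZ //; apply: memvB; first by rewrite memvB ?memvZ.
exact: memv_addr.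
Qed.
End VectorSpaces.

Section LieAlgebra.
Variables (F : fieldType) (V : vectType F) (br : V -> V -> V).
Hypothesis Hbr : is_lie_bracket br.

Lemma lie_bilinear : bilinear_for *:%R *:%R br.
Proof. by case: Hbr => Hl Hr _ _; split=> [z a x y | x a y z]; [exact: Hl | exact: Hr]. Qed.

HB.instance Definition _ := bilinear_isBilinear.Build F V V V *:%R *:%R br lie_bilinear.

Lemma br0l z : br 0 z = 0. Proof. exact: linear0l. Qed.
Lemma br0r z : br z 0 = 0. Proof. exact: linear0r. Qed.
Lemma brDl z : {morph br^~ z : x y / x + y}. Proof. exact: linearDl. Qed.
Lemma brDr z : {morph br z : x y / x + y}. Proof. exact: linearDr. Qed.
Lemma brBl z : {morph br^~ z : x y / x - y}. Proof. exact: linearBl. Qed.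
Lemma brBr z : {morph br z : x y / x - y}. Proof. exact: linearBr. Qed.
Lemma brNl z : {morph br^~ z : x / - x}. Proof. exact: linearNl. Qed.
Lemma brNr z : {morph br z : x / - x}. Proof. exact: linearNr. Qed.
Lemma brZl a x z : br (a *: x) z = a *: br x z. Proof. exact: linearZl_LR. Qed.
Lemma brZr a x z : br z (a *: x) = a *: br z x. Proof. exact: linearZr_LR. Qed.
Lemma brPl a x y z : br (a *: x + y) z = a *: br x z + br y z. Proof. exact: linearPl. Qed.
Lemma brPr a x y z : br z (a *: x + y) = a *: br z x + br z y. Proof. exact: linearPr. Qed.

Lemma brxx x : br x x = 0. Proof. by case: Hbr. Qed.

Lemma brC x y : br x y = - br y x.
Proof.
apply/eqP; rewrite -addr_eq0; apply/eqP.
by have := brxx (x + y); rewrite brDl !brDr !brxx add0r addr0.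
Qed.

Lemma jacobi a b z : br a (br b z) = br b (br a z) + br (br a b) z.
Proof.
case: Hbr => _ _ _ /(_ a b z) /eqP; rewrite -addrA addr_eq0 => /eqP ->.
by rewrite opprD (brC z a) brNr (brC z) !opprK.
Qed.

Lemma brspace_ind (A B : {vspace V}) (Q : V -> Prop) :
  Q 0 -> (forall a u w, Q u -> Q w -> Q (a *: u + w)) ->
  (forall a b, a \in A -> b \in B -> Q (br a b)) ->
  forall u, u \in brspace br A B -> Q u.
Proof.
move=> Q0 QC QS; apply: span_ind => // _ /allpairsP [[a b] /= [aA bB ->]].
by apply: QS; apply: vbasis_mem.
Qed.

Lemma brspace_sub (A B W : {vspace V}) :
  (forall a b, a \in A -> b \in B -> br a b \in W) -> (brspace br A B <= W)%VS.
Proof.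
move=> sABW; apply/subvP; apply: brspace_ind => [|a u w uW wW|//]; first exact: mem0v.
by rewrite memvD ?memvZ.
Qed.

Lemma mem_brspace (A B : {vspace V}) a b :
  a \in A -> b \in B -> br a b \in brspace br A B.
Proof.
move=> aA bB; rewrite -(span_basis (vbasisP A)) in aA.
rewrite -(span_basis (vbasisP B)) in bB.
move: a aA; apply: span_ind => [|c u w uAB wAB|s sA]; first by rewrite br0l mem0v.
  by rewrite brPl memvD ?memvZ.
move: b bB; apply: span_ind => [|c u w uAB wAB|t tB]; first by rewrite br0r mem0v.
  by rewrite brPr memvD ?memvZ.
by apply: memv_span; apply/allpairsP; exists (s, t).
Qed.

Local Notation C k := (lcs br k).

Lemma lcs_succ k : C k.+2 = brspace br fullv (C k.+1).
Proof. by []. Qed.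

Lemma lcs_br k a z : z \in C k.+1 -> br a z \in C k.+2.
Proof. by move=> zC; rewrite lcs_succ mem_brspace ?memvf. Qed.

Lemma mem_lcs2 x y : br x y \in C 2.
Proof. exact: mem_brspace (memvf x) (memvf y). Qed.

Lemma lcs_brl k a z : z \in C k.+1 -> br z a \in C k.+2.
Proof. by move=> zC; rewrite brC memvN lcs_br. Qed.

Lemma lcsS k : (C k.+1 <= C k)%VS.
Proof.
elim: k => [|[|k] IH]; [exact: subvv | exact: subvf |].
by rewrite lcs_succ; apply: brspace_sub => a b _ bC; rewrite lcs_br // (subvP IH).
Qed.

Lemma lcs_leq i j : (i <= j)%N -> (C j <= C i)%VS.
Proof.
move/subnK <-; elim: (j - i)%N => [|d IH]; first exact: subvv.
exact: subv_trans (lcsS _) IH.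
Qed.

Lemma lcs_br_lcs i j a b : a \in C i.+1 -> b \in C j.+1 -> br a b \in C (i + j).+2.
Proof.
elim: i j a b => [|i IH] j a b; first by move=> _; rewrite add0n; apply: lcs_br.
rewrite lcs_succ => aC bC.
move: a aC; apply: (brspace_ind (Q := fun u => br u b \in C (i.+1 + j).+2)).
- by rewrite br0l mem0v.
- by move=> c u w uC wC; rewrite brPl memvD ?memvZ.
move=> a z _ zC; have -> : br (br a z) b = br a (br z b) - br z (br a b).
  by rewrite jacobi addrC addKr.
rewrite memvB //; first by rewrite addSn lcs_br ?IH.
by rewrite addSnnS IH ?lcs_br.
Qed.

Lemma lcs_stable k : C k.+1 = C k.+2 -> forall j, (k <= j)%N -> C j.+1 = C k.+1.
Proof.
move=> Ck j /subnK <-; elim: (j - k)%N => [|d IH] //.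
by rewrite addSn lcs_succ IH -lcs_succ.
Qed.

Lemma nil_class_uniq c1 c2 : nil_class br c1 -> nil_class br c2 -> c1 = c2.
Proof.
have lt_class a b : nil_class br a -> nil_class br b -> (a < b)%N -> False.
  move=> [Ca _] [_ /negP Cb] lt_ab; apply: Cb; rewrite -subv0 -Ca.
  exact: lcs_leq.
move=> h1 h2; case: (ltngtP c1 c2) => // lt12.
  by case: (lt_class _ _ h1 h2 lt12).
by case: (lt_class _ _ h2 h1 lt12).
Qed.

Lemma lcs_span2 k x y w1 w2 :
  (fullv <= <[x]> + <[y]> + C 2)%VS -> (C k.+1 <= <[w1]> + <[w2]> + C k.+2)%VS ->
  (C k.+2 <= <[br x w1]> + <[br x w2]> + <[br y w1]> + <[br y w2]> + C k.+3)%VS.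
Proof.
move=> sgen sCk; rewrite lcs_succ; apply: brspace_sub => a z /(subvP sgen) aS zC.
set W := (_ + _)%VS.
have Wbr b : br b w1 \in W -> br b w2 \in W -> br b z \in W.
  case/memv_addP: (subvP sCk z zC) => z1 /memv_addP [z2 /vlineP [r ->] [z3 /vlineP [s ->] ->]].
  move=> [z4 z4C ->] bw1 bw2.
  by rewrite !brDr !brZr !memvD ?memvZ // memv_addr // lcs_br.
case/memv_addP: aS => a1 /memv_addP [a2 /vlineP [p ->] [a3 /vlineP [q ->] ->]] [a4 a4C ->].
rewrite !brDl !brZl memvD ?memvZ //; last by rewrite memv_addr // (lcs_br_lcs (i := 1)).
have : (<[br x w1]> + <[br x w2]> + <[br y w1]> + <[br y w2]> <= W)%VS by apply: addvSl.
rewrite !subv_add -!memvE => /andP [/andP [/andP [xw1 xw2] yw1] yw2].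
by rewrite memvD ?memvZ ?Wbr.
Qed.

Lemma lcs_span1 k x y w :
  (fullv <= <[x]> + <[y]> + C 2)%VS -> (C k.+1 <= <[w]> + C k.+2)%VS ->
  (C k.+2 <= <[br x w]> + <[br y w]> + C k.+3)%VS.
Proof.
move=> sgen sCk; have sCk2 : (C k.+1 <= <[w]> + <[w]> + C k.+2)%VS.
  by rewrite (addvv <[w]>%VS).
apply: subv_trans (lcs_span2 sgen sCk2) _.
by rewrite (addvv <[br x w]>%VS) -(addvA <[br x w]>%VS) (addvv <[br y w]>%VS).
Qed.

Section Filiform.
Variable c : nat.
Hypotheses (Hfil : filiform br) (Hc : nil_class br c) (c_gt1 : (1 < c)%N).
Local Notation n := (\dim (fullv : {vspace V})).

Lemma dim_filiform : (n = c.+1)%N.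
Proof. by have := nil_class_uniq Hc Hfil; move: c_gt1; lia. Qed.

Lemma lcs_subn k : (k < c)%N -> ~~ (C k.+1 <= C k.+2)%VS.
Proof.
move=> lt_kc; apply/negP => sCk.
have eCk : C k.+1 = C k.+2 by apply/eqP; rewrite eqEsubv sCk lcsS.
have le_kc1 : (k <= c.-1)%N by rewrite -ltnS prednK // (leq_ltn_trans _ lt_kc).
case: Hc => Cc /eqP; apply; rewrite -(prednK (leq_ltn_trans (leq0n k) lt_kc)).
by rewrite (lcs_stable eCk le_kc1) -(lcs_stable eCk (ltnW lt_kc)).
Qed.

Lemma dim_lcs_lt k : (k < c)%N -> (\dim (C k.+2) < \dim (C k.+1))%N.
Proof.
move=> lt_kc; rewrite (ltn_leqif (dimv_leqif_eq (lcsS k.+1))).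
by apply: contraNneq (lcs_subn lt_kc) => ->; exact: subvv.
Qed.

(* If [C 2] had codimension one then [g = <[x]> + C 2] and [C 2 = [g, g] <= C 3]. *)
Lemma dim_lcs2_leq : (\dim (C 2) + 2 <= n)%N.
Proof.
rewrite leqNgt; apply/negP => dimC2.
have /subvPn [x _ xC2] := lcs_subn (ltnW c_gt1).
have full : (<[x]> + C 2)%VS = fullv.
  by apply/eqP; rewrite eqEdim subvf dimv_add_line //; move: dimC2; lia.
suff : (C 2 <= C 3)%VS by apply/negP; apply: lcs_subn.
rewrite {1}lcs_succ; apply: brspace_sub => a b _ _.
have /memv_addP [_ /vlineP [p ->] [a2 a2C ->]] : a \in (<[x]> + C 2)%VS by rewrite full memvf.
have /memv_addP [_ /vlineP [q ->] [b2 b2C ->]] : b \in (<[x]> + C 2)%VS by rewrite full memvf.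
have xb2 : br x b2 \in C 3 := lcs_br x b2C.
have a2x : br a2 x \in C 3 := lcs_brl x a2C.
have a2b2 : br a2 b2 \in C 3.
  by rewrite (subvP (lcs_leq (isT : (3 <= 4)%N))) // (lcs_br_lcs (i := 1) (j := 1)).
by rewrite brDl !brDr !brZl !brZr brxx !scaler0 add0r !memvD ?memvZ.
Qed.

(* The dimension drops at each of the [c] steps from [C 1 = g] to [C c.+1 = 0], by at
   least two at the first one, and [\dim g = c.+1]. *)
Lemma dim_lcs k : (2 <= k <= c.+1)%N -> (\dim (C k) = c.+1 - k)%N.
Proof.
have le_dim i : (2 <= i <= c.+1)%N -> (\dim (C i) + i <= c.+1)%N.
  case/andP; elim: i => // -[//|[_ _ _|i IH _ le_ic]].
    by have := dim_lcs2_leq; rewrite dim_filiform.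
  have := IH isT (ltnW le_ic); have := @dim_lcs_lt i.+1; move: le_ic; lia.
have ge_dim j : (j <= c)%N -> (c.+1 <= (c.+1 - j) + \dim (C (c.+1 - j)))%N.
  elim: j => [|j IH le_jc]; first by rewrite subn0 leq_addr.
  have := IH (ltnW le_jc); have := @dim_lcs_lt (c - j.+1).
  have -> : (c - j.+1).+2 = (c.+1 - j)%N by lia.
  have -> : (c - j.+1).+1 = (c.+1 - j.+1)%N by lia.
  by move: le_jc; lia.
move=> /andP [le2k lekc]; have := le_dim k; have := ge_dim (c.+1 - k)%N.
have -> : (c.+1 - (c.+1 - k) = k)%N by lia.
by move: le2k lekc; lia.
Qed.

Lemma lcs_line k a : (k.+2 <= c)%N -> a \in C k.+2 -> a \notin C k.+3 ->
  (C k.+2 <= <[a]> + C k.+3)%VS.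
Proof.
move=> kc aC aC1; suff /eqP -> : (<[a]> + C k.+3)%VS == C k.+2 by [].
rewrite eqEdim subv_add -memvE aC lcsS dimv_add_line //.
by have := @dim_lcs k.+2; have := @dim_lcs k.+3; move: kc; lia.
Qed.

Lemma lcs2_proper : C 2 != fullv.
Proof.
by apply: proper_fullv_dim; have := @dim_lcs 2; have := dim_filiform; move: c_gt1; lia.
Qed.

Lemma line_lcs2_proper x : (<[x]> + C 2)%VS != fullv.
Proof.
apply: proper_fullv_dim; apply: leq_ltn_trans (dimv_add_leqif _ _) _.
have := dim_vline_leq x; have := @dim_lcs 2; have := dim_filiform; move: c_gt1; lia.
Qed.

Lemma lines_lcs3_proper x y : (<[x]> + <[y]> + C 3)%VS != fullv.
Proof.
apply: proper_fullv_dim; apply: leq_ltn_trans (dimv_add_leqif _ _) _.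
have : (\dim (<[x]> + <[y]>) <= \dim <[x]> + \dim <[y]>)%N := dimv_add_leqif _ _.
have := dim_vline_leq x; have := dim_vline_leq y.
have := @dim_lcs 3; have := dim_filiform; move: c_gt1; lia.
Qed.

Lemma lcs2_gen x y : x \notin C 2 -> y \notin (<[x]> + C 2)%VS ->
  (fullv <= <[x]> + <[y]> + C 2)%VS.
Proof.
move=> xC2 yxC2; suff /eqP <- : (<[y]> + (<[x]> + C 2))%VS == fullv.
  by rewrite addvA (addvC <[y]>%VS).
rewrite eqEdim subvf !dimv_add_line //.
by have := @dim_lcs 2; have := dim_filiform; move: c_gt1; lia.
Qed.

Section GeneratingPair.
Variables x y : V.
Hypothesis sgen : (fullv <= <[x]> + <[y]> + C 2)%VS.

Lemma lcs2_span : (C 2 <= <[br x y]> + C 3)%VS.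
Proof.
apply: subv_trans (lcs_span2 (k := 0) sgen sgen) _.
have xy : br x y \in (<[br x y]> + C 3)%VS by rewrite memv_addl ?memv_line.
by rewrite !subv_add -!memvE addvSr !brxx mem0v (brC y x) memvN xy.
Qed.

Lemma br_gen_notin : br x y \notin C 3.
Proof.
apply: contra (lcs_subn c_gt1) => xyC3.
by apply: subv_trans lcs2_span _; rewrite subv_add -memvE xyC3 subvv.
Qed.

Lemma lcs_gens_absurd k w : (k.+2 <= c)%N -> (C k.+1 <= <[w]> + C k.+2)%VS ->
  br x w \in C k.+3 -> br y w \in C k.+3 -> False.
Proof.
move=> lt_kc sCk xw yw; have /negP := lcs_subn lt_kc; apply.
apply: subv_trans (lcs_span1 sgen sCk) _.
by rewrite !subv_add -!memvE xw yw subvv.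
Qed.
End GeneratingPair.
End Filiform.
End LieAlgebra.

Section UnitComplex.
Variable C : numClosedFieldType.
Implicit Types a b : C.

Lemma unit_neq_opp a : `|a| = 1 -> a != - a.
Proof. by move=> na; rewrite eq_sym eqNr -normr_eq0 na oner_eq0. Qed.

(* [|a + a + b| = 1] gives [a b^* + a^* b = -2], i.e. [(a b^* + 1) (a^* b + 1) = 0]. *)
Lemma norm_dbl_add_neq1 a b : `|a| = 1 -> `|b| = 1 -> b != - a -> `|a + a + b| != 1.
Proof.
move=> na nb; apply: contra_neq => ns.
have aa : a * a^* = 1 by rewrite -normCK na expr1n.
have bb : b * b^* = 1 by rewrite -normCK nb expr1n.
have ss : (a + a + b) * (a^* + a^* + b^*) = 1 by rewrite -!rmorphD -normCK ns expr1n.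
have : 2 * ((a * b^* + 1) * (a^* * b + 1)) = 0.
  have -> : 2 * ((a * b^* + 1) * (a^* * b + 1)) =
      (a + a + b) * (a^* + a^* + b^*) - 4 * (a * a^*) - b * b^* + 2 * (a * a^*) * (b * b^*) + 2.
    by ring.
  by rewrite ss aa bb; ring.
move/eqP; rewrite mulf_eq0 pnatr_eq0 /= mulf_eq0 => /orP []; rewrite addr_eq0 => /eqP e.
- by apply: oppr_inj; rewrite opprK -[a]mulr1 -bb mulrCA e mulrN1.
- by rewrite -[b]mulr1 -aa mulrC -mulrA e mulrN1.
Qed.

End UnitComplex.

Lemma prim_root_exists (F : closedFieldType) n : (0 < n)%N -> n%:R != 0 :> F ->
  {z : F | n.-primitive_root z}.
Proof.
move=> n_gt0 n0; have [r Dp] := closed_field_poly_normal ('X^n - 1 : {poly F}).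
apply/sigW; rewrite (monicP _) ?monicXnsubC // scale1r in Dp.
have rn1 : all n.-unity_root r by apply/allP => z; rewrite -root_prod_XsubC -Dp.
have sz_r : (n < (size r).+1)%N by rewrite -(size_prod_XsubC r id) -Dp size_XnsubC.
have [|z] := hasP (has_prim_root n_gt0 rn1 _ sz_r); last by exists z.
by rewrite -separable_prod_XsubC -Dp separable_Xn_sub_1.
Qed.

Lemma sum_expr_root1 (F : fieldType) n (z : F) : z ^+ n = 1 -> z != 1 ->
  \sum_(j < n) z ^+ j = 0.
Proof.
move=> zn z1; have : (z - 1) * \sum_(j < n) z ^+ j = 0 by rewrite -subrX1 zn subrr.
by move/eqP; rewrite mulf_eq0 subr_eq0 (negbTE z1) => /eqP.
Qed.

Section LinearMaps.
Variables (F : fieldType) (V : vectType F) (P : V -> V).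
Hypothesis Plin : linear P.
HB.instance Definition _ := GRing.isLinear.Build F V V *:%R P Plin.

Lemma eigen_sep (W : {vspace V}) X Y a b : P X = a *: X -> P Y = b *: Y -> a != b ->
  (forall u, u \in W -> P u \in W) -> X - Y \in W -> Y \in W.
Proof.
move=> eX eY ab PW XY; have ab0 : a - b != 0 by rewrite subr_eq0.
have : (a - b) *: Y \in W.
  have -> : (a - b) *: Y = P (X - Y) - a *: (X - Y).
    by rewrite linearB /= eX eY scalerBr !scalerBl opprB [RHS]addrC [RHS]addrA addrNK.
  by rewrite memvB ?memvZ ?PW.
by rewrite -{2}[Y](scalerK ab0) => /(memvZ (a - b)^-1).
Qed.
End LinearMaps.

Section PeriodicMaps.
Variables (C : numClosedFieldType) (V : vectType C) (P : V -> V) (m : nat).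
Hypotheses (Plin : linear P) (m_gt0 : (0 < m)%N) (Pm : forall x, iter m P x = x).
HB.instance Definition _ := GRing.isLinear.Build C V V *:%R P Plin.

Lemma iter_eigen x l k : P x = l *: x -> iter k P x = l ^+ k *: x.
Proof.
move=> ex; elim: k => [|k IH]; first by rewrite expr0 scale1r.
by rewrite iterS IH linearZ /= ex scalerA -exprSr.
Qed.

Lemma periodic_eigen_norm x l : P x = l *: x -> x != 0 -> `|l| = 1.
Proof.
move=> ex x0; have lm : l ^+ m = 1.
  have : (l ^+ m - 1) *: x = 0 by rewrite scalerBl scale1r -iter_eigen // Pm subrr.
  by move/eqP; rewrite scaler_eq0 (negbTE x0) orbF subr_eq0 => /eqP.
by apply/eqP; rewrite -(pexpr_eq1 m_gt0) // -normrX lm normr1.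
Qed.

(* The averages [pi j] of the orbit of [v] twisted by powers of an [m]-th root of
   unity are eigenvectors of [P], and they add up to [m *: v]. *)
Lemma eigen_notin U : U != fullv -> exists x l, P x = l *: x /\ x \notin U.
Proof.
move=> UT; have /subvPn [v _ vU] : ~~ (fullv <= U)%VS.
  by apply: contra UT => sTU; rewrite eqEsubv subvf.
have m0 : m%:R != 0 :> C by rewrite pnatr_eq0 -lt0n.
have [w w_prim] := prim_root_exists m_gt0 m0.
pose f j k := (w ^+ j) ^+ k *: iter k P v.
pose pi j := \sum_(k < m) f j k.
have pi_eigen j : P (pi j) = (w ^+ j)^-1 *: pi j.
  have wj0 : w ^+ j != 0 by rewrite expf_neq0 // (prim_root_eq0 w_prim) -lt0n.
  apply: (scalerI wj0); rewrite scalerA mulfV // scale1r linear_sum scaler_sumr /=.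
  have fS k : w ^+ j *: P (f j k) = f j k.+1.
    by rewrite linearZ /= scalerA -exprS.
  under eq_bigr => k _ do rewrite fS.
  apply: (addrI (f j 0%N)); rewrite -(big_ord_recl m (f j)) big_ord_recr addrC /=.
  congr (_ + _); rewrite /f -exprM mulnC exprM (prim_expr_order w_prim) expr1n Pm.
  by rewrite !scale1r.
have sum_pi : \sum_(j < m) pi j = m%:R *: v.
  rewrite exchange_big (bigD1 (Ordinal m_gt0)) //= [X in _ + X]big1 => [|k k0].
    under eq_bigr => j _ do rewrite /f expr0 scale1r.
    by rewrite sumr_const card_ord scaler_nat addr0.
  under eq_bigr => j _ do rewrite /f -exprM mulnC exprM.
  rewrite -scaler_suml sum_expr_root1 ?scale0r //.
    by rewrite -exprM mulnC exprM (prim_expr_order w_prim) expr1n.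
  by rewrite -(expr0 w) (eq_prim_root_expr w_prim) mod0n modn_small.
have [j pjU | allU] := pickP (fun j : 'I_m => pi j \notin U).
  by exists (pi j), (w ^+ j)^-1; rewrite pi_eigen.
case/negP: vU; rewrite -(scalerK m0 v) -sum_pi memvZ // memv_suml // => j _.
exact/negbFE/allU.
Qed.
End PeriodicMaps.

Section PeriodicPrederivation.
Variables (F : numClosedFieldType) (V : vectType F) (br : V -> V -> V) (P : V -> V) (m : nat).
Hypotheses (Hbr : is_lie_bracket br) (HP : prederivation br P).
Hypotheses (m_gt0 : (0 < m)%N) (Pm : forall x, iter m P x = x).
Local Notation C k := (lcs br k).

Let Plin : linear P := HP.1.
HB.instance Definition _ := GRing.isLinear.Build _ V V *:%R P Plin.

Lemma br2_eigen a b z la lb lz : P a = la *: a -> P b = lb *: b -> P z = lz *: z ->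
  P (br a (br b z)) = (la + lb + lz) *: br a (br b z).
Proof.
by move=> ea eb ez; rewrite HP.2 ea eb ez !(brZl Hbr _) !(brZr Hbr _) !scalerDl.
Qed.

Lemma br2_eigen_eq0 a b z la lb lz : P a = la *: a -> P b = lb *: b -> P z = lz *: z ->
  `|la + lb + lz| != 1 -> br a (br b z) = 0.
Proof.
move=> ea eb ez; apply: contraNeq => abz0.
exact/eqP/(periodic_eigen_norm Plin m_gt0 Pm (br2_eigen ea eb ez) abz0).
Qed.

Lemma lcs_invariant2 k : (forall u, u \in C k.+1 -> P u \in C k.+1) ->
  forall u, u \in C k.+3 -> P u \in C k.+3.
Proof.
move=> PCk; apply: (brspace_ind (Q := fun u => P u \in C k.+3)) => [|a u w uC wC|a y _].
- by rewrite linear0 mem0v.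
- by rewrite linearP /= memvD ?memvZ.
apply: (brspace_ind (Q := fun z => P (br a z) \in C k.+3)) => [|c u w uC wC|b z _ zC].
- by rewrite (br0r Hbr) linear0 mem0v.
- by rewrite (brPr Hbr) linearP /= memvD ?memvZ.
by rewrite HP.2 !memvD ?(lcs_br Hbr) ?PCk.
Qed.

Section Filiform.
Variable c : nat.
Hypotheses (Hfil : filiform br) (Hc : nil_class br c) (c_ge5 : (5 <= c)%N).

Let c_gt1 : (1 < c)%N := leq_trans (isT : (2 <= 5)%N) c_ge5.
Let c_ge3 : (3 <= c)%N := leq_trans (isT : (3 <= 5)%N) c_ge5.
Let c_ge4 : (4 <= c)%N := leq_trans (isT : (4 <= 5)%N) c_ge5.
Let norm_eigen := periodic_eigen_norm Plin m_gt0 Pm.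

Lemma gen_pair_opp x y al be : P x = al *: x -> P y = be *: y -> x != 0 -> y != 0 ->
  (fullv <= <[x]> + <[y]> + C 2)%VS -> be = - al.
Proof.
move=> ex ey x0 y0 sgen; apply/eqP/contraT => be_al; exfalso.
have ua := norm_eigen ex x0; have ub := norm_eigen ey y0.
have xxy : br x (br x y) = 0 by apply: (br2_eigen_eq0 ex ex ey); apply: norm_dbl_add_neq1.
have yxy : br y (br x y) = 0.
  apply: (br2_eigen_eq0 ey ex ey); rewrite addrAC; apply: norm_dbl_add_neq1 => //.
  by apply: contra be_al => /eqP ->; rewrite opprK.
apply: (lcs_gens_absurd Hbr Hc sgen c_ge3 (lcs2_span Hbr sgen)).
  by rewrite xxy mem0v.
by rewrite yxy mem0v.
Qed.

Lemma exists_gen_pair : exists x y al, [/\ P x = al *: x, P y = - al *: y,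
  x != 0, y != 0 & (fullv <= <[x]> + <[y]> + C 2)%VS].
Proof.
have [x [al [ex xC2]]] := eigen_notin Plin m_gt0 Pm (lcs2_proper Hbr Hfil Hc c_gt1).
have [y [be [ey yxC2]]] := eigen_notin Plin m_gt0 Pm (line_lcs2_proper Hbr Hfil Hc c_gt1 x).
have x0 : x != 0 by apply: contraNneq xC2 => ->; exact: mem0v.
have y0 : y != 0 by apply: contraNneq yxC2 => ->; exact: mem0v.
have sgen := lcs2_gen Hbr Hfil Hc c_gt1 xC2 yxC2.
exists x, y, al; rewrite -(gen_pair_opp ex ey x0 y0 sgen).
by split.
Qed.

Lemma exists_lcs2_eigen x y al : P x = al *: x -> P y = - al *: y -> x != 0 -> y != 0 ->
  (fullv <= <[x]> + <[y]> + C 2)%VS -> exists v ga, P v = ga *: v /\ br x y - v \in C 3.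
Proof.
move=> ex ey x0 y0 sgen.
have [u [ga [eu uC]]] := eigen_notin Plin m_gt0 Pm (lines_lcs3_proper Hbr Hfil Hc c_gt1 x y).
have u0 : u != 0 by apply: contraNneq uC => ->; exact: mem0v.
case/memv_addP: (subvP sgen u (memvf u)) => _ /memv_addP [_ /vlineP [a ->] [_ /vlineP [b ->] ->]].
move=> [w wC2 uE]; have wE : w = u - (a *: x + b *: y) by rewrite uE addrAC subrr add0r.
have b_ga : b != 0 -> ga = - al.
  move=> b0; apply: gen_pair_opp ex eu x0 u0 _.
  by apply: (subv_add_line_exchange (a := a) b0 sgen); rewrite -wE.
have a_ga : a != 0 -> ga = al.
  move=> a0; rewrite -[al]opprK; apply: gen_pair_opp ey eu y0 u0 _.
  apply: subv_add_line_exchange a0 _ (_ : u - (b *: y + a *: x) \in C 2).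
    by rewrite (addvC <[y]>%VS).
  by rewrite (addrC (b *: y)) -wE.
have ew : P w = ga *: w.
  rewrite wE linearB linearD !linearZ /= eu ex ey scalerBr scalerDr !scalerA.
  congr (_ - (_ *: _ + _ *: _)).
    by case: (eqVneq a 0) => [->|/a_ga ->]; rewrite ?mul0r ?mulr0 // mulrC.
  by case: (eqVneq b 0) => [->|/b_ga ->]; rewrite ?mul0r ?mulr0 // mulrC.
have wC3 : w \notin C 3.
  apply: contra uC => wC3; rewrite uE; apply: memv_add => //.
  by apply: memv_add; apply/memvZ/memv_line.
have sC2 := lcs_line Hbr Hfil Hc c_gt1 (k := 0) c_gt1 wC2 wC3.
have [t xyt] := memv_add_line (subvP sC2 _ (mem_lcs2 Hbr x y)).
exists (t *: w), ga; split=> //.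
by rewrite linearZ /= ew !scalerA mulrC.
Qed.

Section Lcs2Eigenvector.
Variables (x y v : V) (al ga : F).
Hypotheses (ex : P x = al *: x) (ey : P y = - al *: y) (ev : P v = ga *: v).
Hypotheses (ua : `|al| = 1) (sgen : (fullv <= <[x]> + <[y]> + C 2)%VS).
Hypothesis xyv : br x y - v \in C 3.

Lemma lcs2_eigen_mem : v \in C 2.
Proof.
have -> : v = br x y - (br x y - v) by rewrite opprB addrC subrK.
by rewrite memvB ?mem_lcs2 // (subvP (lcs_leq Hbr (isT : (2 <= 3)%N))).
Qed.

Lemma lcs2_eigen_notin : v \notin C 3.
Proof.
apply: contra (br_gen_notin Hbr Hc c_gt1 sgen) => vC3.
by rewrite -(subrK v (br x y)) memvD.
Qed.

Lemma lcs2_eigen_line : (C 2 <= <[v]> + C 3)%VS.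
Proof. exact: (lcs_line Hbr Hfil Hc c_gt1 (k := 0) c_gt1 lcs2_eigen_mem lcs2_eigen_notin). Qed.

Lemma lcs3_eigen_span : (C 3 <= <[br x v]> + <[br y v]> + C 4)%VS.
Proof. exact: (lcs_span1 Hbr (k := 1) sgen lcs2_eigen_line). Qed.

Lemma br_gen_eigen_lcs5 : br (br x y) v \in C 5.
Proof.
have -> : br (br x y) v = br (br x y - v) v by rewrite (brBl Hbr) (brxx Hbr) subr0.
exact: (lcs_br_lcs Hbr (i := 2) (j := 1)) lcs2_eigen_mem.
Qed.

Lemma br_gen_eigen_lcs6 w : w \in C 3 -> br (br x y) w - br v w \in C 6.
Proof. by move=> wC3; rewrite -(brBl Hbr) (lcs_br_lcs Hbr (i := 2) (j := 2)). Qed.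

Lemma lcs6_invariant u : u \in C 6 -> P u \in C 6.
Proof.
have PC1 w : w \in C 1 -> P w \in C 1 by move=> _; exact: memvf.
have PC3 := lcs_invariant2 (k := 0) PC1.
have PC2 w : w \in C 2 -> P w \in C 2.
  case/(subvP lcs2_eigen_line)/memv_addP => _ /vlineP [t ->] [w3 w3C ->].
  rewrite linearP /= ev memvD ?memvZ ?lcs2_eigen_mem //.
  by rewrite (subvP (lcs_leq Hbr (isT : (2 <= 3)%N))) ?PC3.
exact: (lcs_invariant2 (k := 3) (lcs_invariant2 (k := 1) PC2)).
Qed.

Let v0 : v != 0.
Proof. by apply: contraNneq lcs2_eigen_notin => ->; exact: mem0v. Qed.

(* Otherwise [[x,[x,v]]], [[y,[y,v]]], [[v,[x,v]]] and [[v,[y,v]]] all vanish, and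
   [C 5] collapses onto [C 6]. *)
Lemma lcs2_eigenvalue_pm : ga = al \/ ga = - al.
Proof.
case: (eqVneq ga al) => [|ga_al]; [by left | right]; apply/eqP/contraT => ga_Nal; exfalso.
have uNa : `|- al| = 1 by rewrite normrN.
have ug := norm_eigen ev v0.
have z1 : br x (br x v) = 0 by apply: (br2_eigen_eq0 ex ex ev); apply: norm_dbl_add_neq1.
have z2 : br y (br y v) = 0.
  by apply: (br2_eigen_eq0 ey ey ev); apply: norm_dbl_add_neq1; rewrite ?opprK.
have z3 : br v (br x v) = 0.
  apply: (br2_eigen_eq0 ev ex ev); rewrite addrAC; apply: norm_dbl_add_neq1 => //.
  by apply: contra ga_Nal => /eqP ->; rewrite opprK.
have z4 : br v (br y v) = 0.
  apply: (br2_eigen_eq0 ev ey ev); rewrite addrAC; apply: norm_dbl_add_neq1 => //.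
  by apply: contra ga_al => /eqP /oppr_inj ->.
set u := br x (br y v).
have yxv : br y (br x v) = u - br (br x y) v by rewrite /u (jacobi Hbr x y v) addrK.
have sC4 : (C 4 <= <[u]> + C 5)%VS.
  apply: subv_trans (lcs_span2 Hbr sgen lcs3_eigen_span) _.
  have uW : u \in (<[u]> + C 5)%VS by rewrite memv_addl ?memv_line.
  have xyvW : br (br x y) v \in (<[u]> + C 5)%VS by rewrite memv_addr ?br_gen_eigen_lcs5.
  by rewrite !subv_add -!memvE addvSr z1 z2 mem0v uW yxv memvB.
have xvC3 : br x v \in C 3 := lcs_br Hbr x lcs2_eigen_mem.
have yvC3 : br y v \in C 3 := lcs_br Hbr y lcs2_eigen_mem.
apply: (lcs_gens_absurd Hbr Hc sgen c_ge5 sC4).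
- rewrite /u (jacobi Hbr x y v) (brDr Hbr) memvD //; last first.
    exact: (lcs_br Hbr x br_gen_eigen_lcs5).
  rewrite (jacobi Hbr x y (br x v)) z1 (br0r Hbr) add0r.
  by have := br_gen_eigen_lcs6 xvC3; rewrite z3 subr0.
- rewrite /u (jacobi Hbr y x (br y v)) z2 (br0r Hbr) add0r (brC Hbr y x) (brNl Hbr) memvN.
  by have := br_gen_eigen_lcs6 yvC3; rewrite z4 subr0.
Qed.

Let yyxy : br y (br y (br y (br x y))) = 0.
Proof.
have eyxy : P (br y (br x y)) = - al *: br y (br x y).
  by rewrite (br2_eigen ey ex ey) addNr add0r.
have uNa : `|- al| = 1 by rewrite normrN.
exact: br2_eigen_eq0 ey ey eyxy (norm_dbl_add_neq1 uNa uNa (unit_neq_opp uNa)).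
Qed.

Let vxyC3 : v - br x y \in C 3. Proof. by rewrite -opprB memvN. Qed.

Lemma br_yyyv_lcs6 : br y (br y (br y v)) \in C 6.
Proof.
have -> : br y v = br y (br x y) + br y (v - br x y) by rewrite -(brDr Hbr) addrC subrK.
rewrite (brDr Hbr y) (brDr Hbr y) yyxy add0r.
by do 3!apply: (lcs_br Hbr); exact: vxyC3.
Qed.

Section EqualEigenvalue.
Hypothesis eva : P v = al *: v.

Let al3_neq1 : `|al + al + al| != 1 := norm_dbl_add_neq1 ua ua (unit_neq_opp ua).
Let xxv : br x (br x v) = 0 := br2_eigen_eq0 ex ex eva al3_neq1.
Let xvC3 : br x v \in C 3 := lcs_br Hbr x lcs2_eigen_mem.
Let yvC3 : br y v \in C 3 := lcs_br Hbr y lcs2_eigen_mem.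

Lemma br_xv_lcs4 : br x v \in C 4.
Proof.
apply: contraT => xvC4; exfalso.
have sC3 := lcs_line Hbr Hfil Hc c_gt1 (k := 1) c_ge3 xvC3 xvC4.
apply: (lcs_gens_absurd Hbr Hc sgen c_ge4 sC3); first by rewrite xxv mem0v.
have [t /(lcs_br Hbr x) yvt] := memv_add_line (subvP sC3 _ yvC3).
rewrite (jacobi Hbr y x) (brC Hbr y x) (brNl Hbr); apply: memvB br_gen_eigen_lcs5.
by rewrite -[br y v](subrK (t *: br x v)) (brDr Hbr) (brZr Hbr) xxv scaler0 addr0.
Qed.

(* Modulo [C 6], [[x,[y,[y,v]]]] is congruent both to an eigenvector for [- al] and to
   one for [al]. *)
Lemma br_xyyv_lcs6 : br x (br y v) \in C 5 -> br x (br y (br y v)) \in C 6.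
Proof.
move=> xyvC5; set X := br x (br y (br y (br x y))); set Y := br v (br y v).
have eX : P X = - al *: X.
  by rewrite (br2_eigen ex ey (br2_eigen ey ex ey)) !addrA addrN !add0r addNr add0r.
have eY : P Y = al *: Y by rewrite (br2_eigen eva ey eva) addrN add0r.
have xX : br x (br y (br y v)) - X \in C 6.
  by rewrite -!(brBr Hbr); do 3!apply: (lcs_br Hbr); exact: vxyC3.
have xY : br x (br y (br y v)) - Y \in C 6.
  rewrite (jacobi Hbr x y (br y v)) -addrA memvD ?br_gen_eigen_lcs6 //.
  exact: (lcs_br Hbr y xyvC5).
have XY : X - Y \in C 6.
  have -> : X - Y = (br x (br y (br y v)) - Y) - (br x (br y (br y v)) - X).
    by rewrite opprB [RHS]addrC [RHS]addrA subrK.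
  exact: memvB.
have YC6 : Y \in C 6.
  by apply: (eigen_sep Plin eX eY _ lcs6_invariant XY); rewrite eq_sym unit_neq_opp.
by rewrite -(subrK Y (br x (br y (br y v)))) memvD.
Qed.
End EqualEigenvalue.

Lemma lcs2_eigenvalue_neq : ga != al.
Proof.
apply/eqP => ga_al; have eva : P v = al *: v by rewrite ev ga_al.
have xvC4 := br_xv_lcs4 eva; have yvC3 : br y v \in C 3 := lcs_br Hbr y lcs2_eigen_mem.
have yvC4 : br y v \notin C 4.
  apply: contra (lcs_subn Hbr Hc (k := 2) c_ge3) => yvC4.
  by apply: subv_trans lcs3_eigen_span _; rewrite !subv_add -!memvE xvC4 yvC4 subvv.
have sC3 := lcs_line Hbr Hfil Hc c_gt1 (k := 1) c_ge3 yvC3 yvC4.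
have xyvC5 : br x (br y v) \in C 5.
  by rewrite (jacobi Hbr x y v) memvD ?br_gen_eigen_lcs5 // (lcs_br Hbr y xvC4).
set s := br y (br y v).
have sC4 : (C 4 <= <[s]> + C 5)%VS.
  apply: subv_trans (lcs_span1 Hbr sgen sC3) _.
  have sW : s \in (<[s]> + C 5)%VS by rewrite memv_addl ?memv_line.
  by rewrite !subv_add -!memvE addvSr sW memv_addr.
apply: (lcs_gens_absurd Hbr Hc sgen c_ge5 sC4); first exact: br_xyyv_lcs6 eva xyvC5.
exact: br_yyyv_lcs6.
Qed.
End Lcs2Eigenvector.

Lemma no_periodic_prederivation : False.
Proof.
have [x [y [al [ex ey x0 y0 sgen]]]] := exists_gen_pair.
have [v [ga [ev xyv]]] := exists_lcs2_eigen ex ey x0 y0 sgen.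
have ua := norm_eigen ex x0.
case: (lcs2_eigenvalue_pm ex ey ev ua sgen xyv) => [ga_al | ga_Nal].
  by move: (lcs2_eigenvalue_neq ex ey ev ua sgen xyv); rewrite ga_al eqxx.
(* [ga = - al]: exchange the roles of [x] and [y]. *)
have ex' : P x = - - al *: x by rewrite opprK.
have ev' : P (- v) = ga *: - v by rewrite linearN /= ev scalerN.
have ua' : `|- al| = 1 by rewrite normrN.
have sgen' : (fullv <= <[y]> + <[x]> + C 2)%VS by rewrite (addvC <[y]>%VS).
have yxv : br y x - - v \in C 3 by rewrite (brC Hbr) opprK addrC -opprB memvN.
by move: (lcs2_eigenvalue_neq ey ex' ev' ua' sgen' yxv); rewrite ga_Nal eqxx.
Qed.
End Filiform.
End PeriodicPrederivation.

Theorem corollary5p12 (R : realType) (V : vectType (complex R))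
    (br : V -> V -> V) (c : nat) :
  is_lie_bracket br -> filiform br -> nil_class br c -> (5 <= c)%N ->
  ~ (exists P : V -> V, prederivation br P /\ periodic P).
Proof.
move=> Hbr Hfil Hc c_ge5 [P [HP [m [m_gt0 Pm]]]].
exact: (no_periodic_prederivation Hbr HP m_gt0 Pm Hfil Hc c_ge5).
Qed.
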